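(* Let $S=\{x_1,\ldots,x_n\}$ be a factor-closed set of $n$ distinct positive integers, let $k\in\mathbb{N}$, and let $F(r;n_1,\ldots,n_k)$ ($r,n_1,\ldots,n_k\in\mathbb{N}$) be even $\pmod r$ with respect to $n_1,\ldots,n_k$. Let $I=\{2,3,\ldots,k+1\}$ if $k$ is even and $I=\{1,2,\ldots,k+1\}$ if $k$ is odd. Then \[ \det_I\bigl(F(x_{i_1};x_{i_2},\ldots,x_{i_{k+1}})\bigr)_{1\le i_1,\ldots,i_{k+1}\le n}=(x_1\cdots x_n)^k\prod_{v=1}^n\alpha_{x_v}(x_v,\ldots,x_v). \]
   Context: A set $S$ of positive integers is factor-closed if every positive divisor of every element of $S$ lies in $S$. $F$ is even $\pmod r$ if $F(r;n_1,\ldots,n_k)=F(r;\gcd(n_1,r),\ldots,\gcd(n_k,r))$ for all $r,n_1,\ldots,n_k$. $c(k,n):=\sum_{d\mid\gcd(k,n)}\mu(k/d)\,d$ is the Ramanujan sum. The finite Fourier coefficients are, for $d_1,\ldots,d_k\mid r$, \[ \alpha_r(d_1,\ldots,d_k):=\frac{1}{r^k}\sum_{\delta_1,\ldots,\delta_k\mid r}F(r;\delta_1,\ldots,\delta_k)\,c\Bigl(\frac{r}{\delta_1},\frac{r}{d_1}\Bigr)\cdots c\Bigl(\frac{r}{\delta_k},\frac{r}{d_k}\Bigr). \] For a $K$-dimensional matrix $A$ of order $n$ and $J\subseteq\{1,\ldots,K\}$, with $\eta_j=1$ if $j\in J$ and $0$ otherwise, the hyperdeterminant is $\det_JA:=\frac{1}{n!}\sum_{\sigma_1,\ldots,\sigma_K\in\mathfrak{S}_n}\prod_{j=1}^K\mathrm{sgn}(\sigma_j)^{\eta_j}\prod_{v=1}^nA(\sigma_1(v),\ldots,\sigma_K(v))$,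 $\mathfrak{S}_n$ the symmetric group on $\{1,\ldots,n\}$. *)

From mathcomp Require Import all_boot all_order all_algebra all_fingroup.
Set Implicit Arguments. Unset Strict Implicit. Unset Printing Implicit Defensive.
Import GRing.Theory Num.Theory.
Local Open Scope ring_scope.

Definition squarefree (n : nat) : bool := all (fun p => logn p n == 1)%N (primes n).
Definition mobius (n : nat) : int :=
  if (n == 0)%N then 0
  else if squarefree n then (-1) ^+ size (primes n) else 0.

Definition ramanujan (k n : nat) : int :=
  \sum_(d <- divisors (gcdn k n)) mobius (k %/ d)%N * (d%:Z).

Definition factor_closed (n : nat) (x : 'I_n -> nat) : Prop :=
  (forall v, (0 < x v)%N) /\
  (forall v d, (d %| x v)%N -> exists w, x w = d).

Definition even_mod (R : Type) (k : nat) (F : nat -> ('I_k -> nat) -> R) : Prop :=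
  forall r (ns : 'I_k -> nat), F r ns = F r (fun j => gcdn (ns j) r).

Definition alpha (R : numFieldType) (k : nat) (F : nat -> ('I_k -> nat) -> R)
    (r : nat) (d : 'I_k -> nat) : R :=
  ((r%:R ^+ k)^-1) *
  \sum_(delta : {ffun 'I_k -> 'I_r.+1} | [forall j, (0 < delta j)%N && (delta j %| r)%N])
     F r (fun j => nat_of_ord (delta j)) *
     \prod_(j < k) ((ramanujan (r %/ delta j) (r %/ d j))%:~R).

Definition hyperdet (R : numFieldType) (K n : nat) (J : pred 'I_K)
    (A : ('I_K -> 'I_n) -> R) : R :=
  ((n`!)%:R)^-1 *
  \sum_(sigma : {ffun 'I_K -> {perm 'I_n}})
     (\prod_(j < K) (if J j then (-1) ^+ (odd_perm (sigma j)) else 1)) *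
     \prod_(v < n) A (fun j => sigma j v).

From mathcomp Require Import all_boot all_order all_algebra all_fingroup.
From Stdlib Require Import FunctionalExtensionality.
Import GRing.Theory Num.Theory.
Set Implicit Arguments. Unset Strict Implicit. Unset Printing Implicit Defensive.

(* Substituting sigma_j = sigma_0 tau_j (j >= 1) in the hyperdeterminant makes the sign of
   sigma_0 appear to an even power (this is what the choice of I achieves), so
   det_I = sum_tau sgn(tau) prod_u F(x_u; x_{tau_1 u}, ..., x_{tau_k u}).
   As F(x_u; .) only depends on gcds with x_u and S is factor-closed, Moebius inversion
   on S writes F(x_u; x_{b_1}, ..., x_{b_k}) = sum_l g_u(l) prod_j [x_{l_j} | x_{b_j}],
   with g_u(l) = 0 unless every x_{l_j} divides x_u.  Expanding, the sum becomes
   sum_L prod_u g_u(L_u) prod_j det(rows L_{.j} of the zeta matrix); such a determinant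
   vanishes unless u |-> L_{uj} is a permutation, and a permutation that decreases x in
   the divisibility order is the identity.  Only L_{uj} = u survives, and
   g_u(u, ..., u) = x_u^k alpha_{x_u}(x_u, ..., x_u) because c(m, 1) = mu(m). *)

Section Mobius.
Variables (p d : nat).
Hypotheses (p_pr : prime p) (d_gt0 : 0 < d).

Lemma mobius_prime_mul : ~~ (p %| d) -> mobius (p * d) = (- mobius d)%R.
Proof.
move=> p_ndvd_d; have p_gt0 := prime_gt0 p_pr.
have primes_pd : perm_eq (primes (p * d)) (p :: primes d).
  apply: uniq_perm; rewrite ?primes_uniq //=.
    by rewrite primes_uniq mem_primes (negbTE p_ndvd_d) !andbF.
  move=> q; rewrite in_cons primesM // (mem_primes q p) p_gt0 /=.
  case: (boolP (prime q)) => [q_pr | q_npr]; first by rewrite dvdn_prime2 // eq_sym.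
  by rewrite mem_primes (negbTE q_npr); case: eqP => // q_p; rewrite q_p p_pr in q_npr.
rewrite /mobius muln_eq0 !eqn0Ngt p_gt0 d_gt0 /=.
rewrite (perm_size primes_pd) /squarefree (perm_all _ primes_pd) /=.
rewrite lognM // logn_prime // eqxx (lognE p d) (negbTE p_ndvd_d) !andbF /=.
rewrite (@eq_in_all _ _ (fun q => logn q d == 1)); last first.
  move=> q; rewrite mem_primes => /and3P[q_pr _ q_dvd_d].
  have q_neq_p : q != p by apply: contraNneq p_ndvd_d => <-.
  by rewrite lognM // logn_prime // (negbTE q_neq_p).
by case: ifP => _; rewrite ?exprS ?mulN1r ?oppr0.
Qed.

Lemma mobius_prime_mul_dvd : p %| d -> mobius (p * d) = 0%R.
Proof.
move=> p_dvd_d; have p_gt0 := prime_gt0 p_pr.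
rewrite /mobius muln_eq0 !eqn0Ngt p_gt0 d_gt0 /=.
suff /negbTE -> : ~~ squarefree (p * d) by [].
apply/allPn; exists p; first by rewrite mem_primes p_pr muln_gt0 p_gt0 d_gt0 dvdn_mulr.
by rewrite lognM // logn_prime // eqxx lognE p_pr d_gt0 p_dvd_d.
Qed.

End Mobius.

Lemma sum_mobius_dvd m : 0 < m -> (\sum_(d < m.+1 | (d %| m)%N) mobius d = (m == 1)%:R)%R.
Proof.
case: (ltngtP m 1) => // [m_gt1 _ | -> _]; last first.
  by rewrite big_mkcond !big_ord_recr big_ord0.
have m_gt0 : 0 < m := ltnW m_gt1.
(* With p the least prime factor of m, the divisors d with mu(d) <> 0 come in pairs
   e, p e with p not dividing e, and mu(p e) = - mu(e). *)
pose p := pdiv m; have p_pr : prime p := pdiv_prime m_gt1.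
have p_dvd_m : p %| m := pdiv_dvd m; have p_gt0 := prime_gt0 p_pr.
rewrite (bigID (fun d : 'I_m.+1 => p %| d)) /=.
rewrite (bigID (fun d : 'I_m.+1 => p %| d %/ p)) /= [X in (X + _ + _)%R]big1 ?add0r; last first.
  move=> d /andP[/andP[d_dvd_m p_dvd_d] p_dvd_dp].
  have dp_gt0 : 0 < d %/ p by rewrite divn_gt0 // dvdn_leq // (dvdn_gt0 m_gt0 d_dvd_m).
  by rewrite -(divnK p_dvd_d) mulnC mobius_prime_mul_dvd.
have pe_dvd_m (e : nat) : e %| m -> ~~ (p %| e) -> p * e %| m.
  by move=> e_dvd_m p_ndvd_e; rewrite Gauss_dvd ?p_dvd_m ?e_dvd_m // prime_coprime.
have inord_pe (e : nat) : e %| m -> ~~ (p %| e) -> (inord (p * e) : 'I_m.+1) = p * e :> nat.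
  by move=> e_dvd_m p_ndvd_e; rewrite inordK // ltnS dvdn_leq // pe_dvd_m.
rewrite (reindex_onto (fun e : 'I_m.+1 => inord (p * e))
                      (fun d : 'I_m.+1 => inord (d %/ p))) /=; last first.
  move=> d /andP[/andP[d_dvd_m p_dvd_d] _]; apply: val_inj.
  have dp_le_m : d %/ p <= m by rewrite (leq_trans (leq_div _ _)) // dvdn_leq.
  by rewrite inordK // mulnC divnK // inord_val.
rewrite [X in (X + _)%R](eq_bigl (fun e : 'I_m.+1 => (e %| m) && ~~ (p %| e))); last first.
  move=> e; apply/idP/idP => [|/andP[e_dvd_m p_ndvd_e]].
    move=> /andP[/andP[/andP[]]]; rewrite /inord val_insubd.
    case: ifP => _ pe_dvd_m' _; last by rewrite dvd0n gtn_eqF in pe_dvd_m'.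
    rewrite mulKn // => p_ndvd_e _.
    by rewrite p_ndvd_e andbT (dvdn_trans _ pe_dvd_m') // dvdn_mull.
  by rewrite inord_pe // pe_dvd_m // dvdn_mulr //= mulKn // inord_val eqxx p_ndvd_e.
rewrite [X in (X + _)%R](eq_bigr (fun e : 'I_m.+1 => mobius (p * e))); last first.
  by move=> e /andP[e_dvd_m p_ndvd_e]; rewrite inord_pe.
rewrite -big_split /=; apply: big1 => e /andP[e_dvd_m p_ndvd_e].
by rewrite mobius_prime_mul ?addNr // (dvdn_gt0 m_gt0).
Qed.

Section Multilinear.
Local Open Scope ring_scope.

Lemma tensor_mulmx_inv (R : comPzRingType) n (J : finType) (M E : 'M[R]_n) :
  M *m E = 1%:M -> forall (h : {ffun J -> 'I_n} -> R) (d : {ffun J -> 'I_n}),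
  \sum_(l : {ffun J -> 'I_n}) (\sum_c h c * \prod_j M (c j) (l j)) * \prod_j E (l j) (d j) = h d.
Proof.
move=> ME1 h d; have ME_entry i i' : \sum_l M i l * E l i' = (i == i')%:R.
  by have := congr1 (fun A : 'M_n => A i i') ME1; rewrite !mxE.
under eq_bigr do rewrite mulr_suml.
rewrite exchange_big /=.
under eq_bigr => c _ do under eq_bigr do rewrite -mulrA -big_split /=.
under eq_bigr => c _ do rewrite -mulr_sumr -(bigA_distr_bigA (fun j l => M (c j) l * E l (d j))).
under eq_bigr => c _ do under eq_bigr => j _ do rewrite ME_entry.
rewrite (bigD1 d) //= big1 ?mulr1 => [|j _]; last by rewrite eqxx.
rewrite big1 ?addr0 // => c c_neq_d.
have /forallPn[j /negbTE c_dj] : ~~ [forall j, c j == d j].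
  by move: c_neq_d; apply: contra => /forallP c_d; apply/eqP/ffunP => j; apply/eqP.
by rewrite (bigD1 j) //= c_dj mul0r mulr0.
Qed.

(* The (k+1)-dimensional hyperdeterminant with its first permutation fixed to the identity. *)
Definition reduced_hyperdet (R : pzRingType) n k (B : 'I_n -> ('I_k -> 'I_n) -> R) : R :=
  \sum_(tau : {ffun 'I_k -> {perm 'I_n}}) (\prod_j (-1) ^+ tau j) * \prod_u B u (fun j => tau j u).

Lemma hyperdet_reduced (R : numFieldType) n k (B : 'I_n -> ('I_k -> 'I_n) -> R) :
  hyperdet (fun j : 'I_k.+1 => odd k || (0 < j)%N)
           (fun i => B (i ord0) (fun j => i (lift ord0 j))) =
  reduced_hyperdet B.
Proof.
pose join (st : {perm 'I_n} * {ffun 'I_k -> {perm 'I_n}}) : {ffun 'I_k.+1 -> {perm 'I_n}} :=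
  [ffun j => if unlift ord0 j is Some j' then (st.1 * st.2 j')%g else st.1].
pose split (sigma : {ffun 'I_k.+1 -> {perm 'I_n}}) :=
  (sigma ord0, [ffun j => ((sigma ord0)^-1 * sigma (lift ord0 j))%g]).
rewrite /hyperdet (reindex join); last first.
  apply: onW_bij; exists split => [[s t] | sigma].
    by rewrite /split ffunE unlift_none; congr pair; apply/ffunP => j; rewrite !ffunE liftK mulKg.
  by apply/ffunP => j; rewrite ffunE; case: unliftP => [j' -> | ->] /=; rewrite ?ffunE ?mulKVg.
pose term (t : {ffun 'I_k -> {perm 'I_n}}) :=
  (\prod_j (-1) ^+ t j) * \prod_u B u (fun j => t j u) : R.
rewrite (eq_bigr (fun st => term st.2)) => [|[s t] _]; last first.
  rewrite /term big_ord_recl /= ffunE unlift_none.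
  under eq_bigr do rewrite ffunE liftK odd_permM signr_addb orbT.
  rewrite big_split /= prodr_const card_ord orbF mulrA.
  have -> : (if odd k then (-1) ^+ s else 1) * (-1) ^+ s ^+ k = 1 :> R.
    case: (odd_perm s); last by rewrite expr1n mulr1; case: ifP.
    by rewrite expr1 -signr_odd; case: (odd k); rewrite ?mulrNN mulr1.
  rewrite mul1r; congr (_ * _); rewrite [RHS](reindex_inj (@perm_inj _ s)); apply: eq_bigr => v _.
  by congr (B _); apply: functional_extensionality => j; rewrite ffunE liftK permM.
rewrite -(pair_bigA _ (fun _ t => term t)) /= sumr_const (_ : #|_| = n`!); last exact: card_Sn.
rewrite -[(\sum_t term t) *+ _]mulr_natl mulrA mulVf ?mul1r //.
by rewrite pnatr_eq0 -lt0n fact_gt0.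
Qed.

Lemma eq_reduced_hyperdet (R : pzRingType) n k (B B' : 'I_n -> ('I_k -> 'I_n) -> R) :
  (forall u b, B u b = B' u b) -> reduced_hyperdet B = reduced_hyperdet B'.
Proof. by move=> BB'; apply: eq_bigr => tau _; congr (_ * _); apply: eq_bigr => u _. Qed.

Lemma reduced_hyperdet_expand (R : comPzRingType) n k (G : 'I_n -> {ffun 'I_k -> 'I_n} -> R)
    (E : 'M[R]_n) :
  reduced_hyperdet (fun u b => \sum_l G u l * \prod_j E (l j) (b j)) =
  \sum_(L : {ffun 'I_n -> {ffun 'I_k -> 'I_n}})
     (\prod_u G u (L u)) * \prod_j \det (rowsub (fun u => L u j) E).
Proof.
rewrite /reduced_hyperdet; under eq_bigr do rewrite bigA_distr_bigA mulr_sumr.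
rewrite exchange_big /=; apply: eq_bigr => L _.
under eq_bigr => tau _ do rewrite big_split /= mulrCA exchange_big -big_split /=.
rewrite -mulr_sumr bigA_distr_bigA /=; congr (_ * _).
apply: eq_bigr => tau _; apply: eq_bigr => j _; congr (_ * _).
by apply: eq_bigr => u _; rewrite mxE.
Qed.

End Multilinear.

Section FactorClosed.
Variables (R : comPzRingType) (n : nat) (x : 'I_n -> nat).
Hypotheses (x_inj : injective x) (x_fc : factor_closed x).

Lemma x_gt0 u : 0 < x u. Proof. by case: x_fc. Qed.

Definition index_of (u : 'I_n) (d : nat) : 'I_n := odflt u [pick w | x w == d].

Lemma index_ofK u v d : d %| x v -> x (index_of u d) = d.
Proof.
case: x_fc => _ /(_ v d) fc /fc[w xw]; rewrite /index_of.
by case: pickP => [? /eqP // | /(_ w)]; rewrite xw eqxx.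
Qed.

Lemma sum_dvd_interval (V : nmodType) (c d : 'I_n) (f : nat -> V) : x c %| x d ->
  (\sum_(l | ((x c %| x l) && (x l %| x d))%N) f (x l %/ x c)%N =
   \sum_(e < (x d %/ x c).+1 | (e %| x d %/ x c)%N) f e)%R.
Proof.
move=> c_dvd_d; set m := x d %/ x c.
have xc_gt0 := x_gt0 c; have xd_gt0 := x_gt0 d.
have xdE : x d = x c * m by rewrite mulnC divnK.
have quot_le l : x l %| x d -> x l %/ x c < m.+1.
  by move=> l_dvd_d; rewrite ltnS leq_div2r // dvdn_leq.
have quot_dvd l : x c %| x l -> x l %| x d -> x l %/ x c %| m.
  by move=> c_dvd_l l_dvd_d; rewrite -(dvdn_pmul2l xc_gt0) -xdE mulnC divnK.
have x_index_ofM (e : nat) : e %| m -> x (index_of c (x c * e)) = x c * e.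
  by move=> e_dvd_m; apply: (@index_ofK _ d); rewrite xdE dvdn_pmul2l.
rewrite (reindex_onto (fun e : 'I_m.+1 => index_of c (x c * e))
                      (fun l => inord (x l %/ x c))); last first.
  move=> l /andP[c_dvd_l l_dvd_d]; apply: x_inj.
  by rewrite x_index_ofM inordK ?quot_le ?quot_dvd // mulnC divnK.
apply: eq_big => [e | e /andP[/andP[_ l_dvd_d] /eqP e_eq]]; last first.
  by rewrite -[in RHS]e_eq inordK ?quot_le.
apply/idP/idP => [/andP[/andP[c_dvd_l l_dvd_d] /eqP e_eq] | e_dvd_m].
  by rewrite -e_eq inordK ?quot_le ?quot_dvd.
rewrite x_index_ofM // dvdn_mulr //= xdE dvdn_pmul2l // e_dvd_m /=.
by apply/eqP/val_inj; rewrite /= mulKn // inord_val.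
Qed.

Lemma dvd_inj_id (f : 'I_n -> 'I_n) : injective f -> (forall u, x (f u) %| x u) -> f =1 id.
Proof.
move=> f_inj f_dvd; have f_le u : x (f u) <= x u by apply: dvdn_leq (x_gt0 u) (f_dvd u).
have sum_f : \sum_u x (f u) = \sum_u x u by rewrite [RHS](reindex_inj f_inj).
have /addnI/eqP : \sum_u x (f u) + \sum_u (x u - x (f u)) = \sum_u x (f u) + 0.
  by rewrite -big_split addn0 sum_f; apply: eq_bigr => u _; apply: subnKC.
rewrite sum_nat_eq0 => /forallP f_eq u; apply: x_inj.
by apply/eqP; rewrite eqn_leq f_le -subn_eq0; exact: f_eq.
Qed.

Local Open Scope ring_scope.

Lemma sum_ffun_dvd (V : nmodType) k u (h : ('I_k -> nat) -> V) :
  \sum_(c : {ffun 'I_k -> 'I_n} | [forall j, x (c j) %| x u]%N) h (fun j => x (c j)) =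
  \sum_(delta : {ffun 'I_k -> 'I_(x u).+1} | [forall j, (0 < delta j) && (delta j %| x u)]%N)
     h (fun j => delta j).
Proof.
have x_lt u' : (x u' %| x u)%N -> (x u' < (x u).+1)%N by move=> ?; rewrite ltnS dvdn_leq ?x_gt0.
rewrite [RHS](reindex_onto (fun c : {ffun 'I_k -> 'I_n} => [ffun j => inord (x (c j))])
   (fun delta => [ffun j => index_of u (delta j)])) => [|delta /forallP delta_dvd]; last first.
  apply/ffunP => j; have /andP[_ dj_dvd] := delta_dvd j.
  by apply: val_inj; rewrite !ffunE /= inordK // (index_ofK _ dj_dvd).
apply: eq_big => [c | c /forallP c_dvd].
  apply/idP/idP => [/forallP c_dvd | /andP[/forallP c_dvd _]]; last first.
    apply/forallP => j; have := c_dvd j; rewrite ffunE /inord val_insubd.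
    by case: ifP => _ /andP[].
  apply/andP; split; first by apply/forallP => j; rewrite ffunE inordK ?x_lt // x_gt0 c_dvd.
  apply/eqP/ffunP => j; rewrite !ffunE; apply: x_inj.
  by rewrite inordK ?x_lt // (index_ofK _ (c_dvd j)).
congr h; apply: functional_extensionality => j.
by rewrite ffunE inordK ?x_lt.
Qed.

Definition zeta_mx : 'M[R]_n := \matrix_(l, b) (x l %| x b)%N%:R.

Definition mobius_mx : 'M[R]_n :=
  \matrix_(c, l) if (x c %| x l)%N then (mobius (x l %/ x c)%N)%:~R else 0.

Lemma mobius_zeta_mx : mobius_mx *m zeta_mx = 1%:M.
Proof.
apply/matrixP => c d; rewrite !mxE.
under eq_bigr do rewrite !mxE mulr_natr mulrb -if_and andbC.
rewrite -big_mkcond /=; have [c_dvd_d | c_ndvd_d] := boolP (x c %| x d)%N.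
  have xc_gt0 := x_gt0 c; have xd_gt0 := x_gt0 d.
  rewrite (sum_dvd_interval (fun e => (mobius e)%:~R)) //.
  rewrite -(mulrz_sumr 1) sum_mobius_dvd; last by rewrite divn_gt0 // dvdn_leq.
  rewrite mulrz_nat.
  suff -> : (x d %/ x c == 1)%N = (c == d) by [].
  apply/eqP/eqP => [quot1 | ->]; last by rewrite divnn x_gt0.
  by apply: x_inj; rewrite -(divnK c_dvd_d) quot1 mul1n.
rewrite big_pred0 => [|l]; last first.
  by apply: contraNF c_ndvd_d => /andP[/dvdn_trans]; apply.
by case: eqP => // c_d; rewrite c_d dvdnn in c_ndvd_d.
Qed.

Lemma det_zeta_mx : \det zeta_mx = 1.
Proof.
rewrite /determinant (bigD1 1%g) //= [X in _ + X]big1 ?addr0 => [|s s_neq1].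
  by rewrite odd_perm1 mul1r big1 // => u _; rewrite mxE perm1 dvdnn.
have /forallPn[u /negbTE u_ndvd] : ~~ [forall u, x u %| x (s u)]%N.
  move: s_neq1; apply: contra => /forallP s_dvd.
  have sV_id : (s^-1)%g =1 id.
    apply: dvd_inj_id => [|v]; first exact: perm_inj.
    by have := s_dvd ((s^-1)%g v); rewrite permKV.
  by apply/eqP/permP => v; rewrite perm1 -{1}(sV_id v) permKV.
by rewrite (bigD1 u) //= mxE u_ndvd mul0r mulr0.
Qed.

Lemma det_rowsub_zeta_mx (f : 'I_n -> 'I_n) : (forall u, x (f u) %| x u)%N ->
  \det (rowsub f zeta_mx) = [forall u, f u == u]%:R.
Proof.
move=> f_dvd; have [/injectiveP f_inj | /injectivePn[u1 [u2 u12 f_u12]]] := boolP (injectiveb f).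
  have f_id := dvd_inj_id f_inj f_dvd.
  have -> : rowsub f zeta_mx = zeta_mx by apply/matrixP => u b; rewrite mxE f_id.
  suff -> : [forall u, f u == u] by rewrite det_zeta_mx.
  by apply/forallP => u; rewrite f_id.
rewrite (determinant_alternate u12) => [|b]; last by rewrite !mxE f_u12.
case: forallP => // f_id; move: u12; rewrite -(eqP (f_id u1)) -(eqP (f_id u2)) f_u12.
by rewrite eqxx.
Qed.
End FactorClosed.

Lemma ramanujan_1 m : ramanujan m 1 = mobius m.
Proof. by rewrite /ramanujan gcdn1 big_seq1 divn1 mulr1. Qed.

Section EvenFunction.
Variables (R : numFieldType) (n : nat) (x : 'I_n -> nat) (k : nat) (F : nat -> ('I_k -> nat) -> R).
Hypotheses (x_inj : injective x) (x_fc : factor_closed x) (F_even : even_mod F).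
Local Open Scope ring_scope.

Definition mobius_coef u (l : {ffun 'I_k -> 'I_n}) : R :=
  if [forall j, x (l j) %| x u]%N then
    \sum_(c : {ffun 'I_k -> 'I_n}) F (x u) (fun j => x (c j)) * \prod_j mobius_mx R x (c j) (l j)
  else 0.

Lemma even_mod_expand u (b : 'I_k -> 'I_n) :
  F (x u) (fun j => x (b j)) = \sum_l mobius_coef u l * \prod_j zeta_mx R x (l j) (b j).
Proof.
set r := x u; pose g := [ffun j => index_of x u (gcdn (x (b j)) r)].
have x_g j : x (g j) = gcdn (x (b j)) r by rewrite ffunE (index_ofK x_fc _ (dvdn_gcdr _ _)).
have -> : F r (fun j => x (b j)) = F r (fun j => x (g j)).
  rewrite F_even [RHS]F_even; congr (F r); apply: functional_extensionality => j.
  by rewrite x_g -gcdnA gcdnn.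
rewrite -(tensor_mulmx_inv (mobius_zeta_mx R x_inj x_fc) (fun c => F r (fun j => x (c j))) g).
apply: eq_bigr => l _; rewrite /mobius_coef.
have [/forallP l_dvd | /forallPn[j lj_ndvd]] := boolP [forall j, x (l j) %| r]%N.
  by congr (_ * _); apply: eq_bigr => j _; rewrite !mxE x_g dvdn_gcd l_dvd andbT.
by rewrite mul0r (bigD1 j) //= mxE x_g dvdn_gcd (negbTE lj_ndvd) andbF mul0r mulr0.
Qed.

Lemma mobius_coef_diag u : mobius_coef u [ffun=> u] = (x u)%:R ^+ k * alpha F (x u) (fun=> x u).
Proof.
set r := x u; have r_gt0 : (0 < r)%N := x_gt0 x_fc u.
rewrite /alpha mulrA mulfV ?mul1r ?expf_neq0 ?pnatr_eq0 -?lt0n //.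
rewrite /mobius_coef ifT; last by apply/forallP => j; rewrite ffunE.
under [RHS]eq_bigr do under eq_bigr do rewrite divnn r_gt0 ramanujan_1.
rewrite (bigID (fun c : {ffun 'I_k -> 'I_n} => [forall j, x (c j) %| r]%N)) /=.
rewrite [X in _ + X]big1 ?addr0 => [|c /forallPn[j cj_ndvd]]; last first.
  by rewrite (bigD1 j) //= mxE ffunE (negbTE cj_ndvd) mul0r mulr0.
rewrite (eq_bigr (fun c : {ffun 'I_k -> 'I_n} =>
                   F r (fun j => x (c j)) * \prod_j (mobius (r %/ x (c j)))%:~R)).
  exact: (sum_ffun_dvd x_inj x_fc u (fun d => F r d * \prod_j (mobius (r %/ d j))%:~R)).
by move=> c /forallP c_dvd; congr (_ * _); apply: eq_bigr => j _; rewrite mxE ffunE c_dvd.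
Qed.

Lemma reduced_hyperdet_even_mod :
  reduced_hyperdet (fun u b => F (x u) (fun j => x (b j))) = \prod_u mobius_coef u [ffun=> u].
Proof.
rewrite (eq_reduced_hyperdet even_mod_expand) reduced_hyperdet_expand.
pose diag := [ffun u => [ffun=> u]] : {ffun 'I_n -> {ffun 'I_k -> 'I_n}}.
rewrite (bigD1 diag) //= [X in _ + X]big1 ?addr0 => [|L L_ndiag].
  rewrite [X in _ * X]big1 ?mulr1 => [|j _]; first by apply: eq_bigr => u _; rewrite ffunE.
  rewrite det_rowsub_zeta_mx // => [|u]; last by rewrite !ffunE dvdnn.
  by rewrite (_ : [forall u, _] = true) //; apply/forallP => u; rewrite !ffunE.
have [L_dvd | /forallPn[u /forallPn[j Luj_ndvd]]] := boolP [forall u, forall j, x (L u j) %| x u]%N.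
  have /forallPn[j /negbTE Lj_nid] : ~~ [forall j, forall u, L u j == u].
    move: L_ndiag; apply: contra => /forallP L_id; apply/eqP/ffunP => u; apply/ffunP => j.
    by rewrite !ffunE; apply/eqP; move/forallP: (L_id j).
  rewrite (bigD1 j) //= det_rowsub_zeta_mx // ?Lj_nid ?mul0r ?mulr0 // => u.
  by move: (forallP L_dvd u) => /forallP.
by rewrite (bigD1 u) //= /mobius_coef ifN ?mul0r //; apply/forallPn; exists j.
Qed.

End EvenFunction.

Local Open Scope ring_scope.

Theorem theorem4p6 (R : numFieldType) (n : nat) (x : 'I_n -> nat)
  (k : nat) (F : nat -> ('I_k -> nat) -> R) :
  injective x -> factor_closed x -> even_mod F ->
  hyperdet (fun j : 'I_k.+1 => odd k || (0 < j)%N)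
    (fun i : 'I_k.+1 -> 'I_n =>
       F (x (i ord0)) (fun j : 'I_k => x (i (lift ord0 j)))) =
  ((\prod_(v < n) x v)%N%:R) ^+ k *
  \prod_(v < n) alpha F (x v) (fun _ => x v).
Proof.
move=> x_inj x_fc F_even.
rewrite (hyperdet_reduced (fun u b => F (x u) (fun j => x (b j)))).
rewrite reduced_hyperdet_even_mod //; under eq_bigr do rewrite mobius_coef_diag //.
by rewrite big_split /= prodrXl natr_prod.
Qed.
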